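(* Let $H\in\mathbb{R}^{d\times d}$ be symmetric positive definite, $q\in\mathbb{R}^d$ and $\theta_*=H^{-1}q$. For each $n\ge 1$ let $P_n,Q_n,R_n\in\mathbb{R}[X]$ be polynomials, and set $A_n=P_n(H)$, $B_n=Q_n(H)$, $c_n=R_n(H)q$. Assume: (i) ($\theta_*$-stationarity) $\theta_*=A_n\theta_*+B_n\theta_*+c_n$ for all $n\ge 1$; (ii) ($n$-scalability) there exist matrices $A,B\in\mathbb{R}^{d\times d}$ such that $A_n=\frac{n}{n+1}A$ and $B_n=\frac{n-1}{n+1}B$ for all $n\ge 1$. Then there exist polynomials $\bar A,\bar B\in\mathbb{R}[X]$ such that for all $n\ge1$: $$A_n=\frac{2n}{n+1}\Big(I-\frac{\bar A(H)+\bar B(H)}{2}H\Big),\qquad B_n=-\frac{n-1}{n+1}\big(I-\bar B(H)H\big),\qquad c_n=\frac{n\bar A(H)+\bar B(H)}{n+1}\,q.$$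
   Context: These matrices define the second-order iterative algorithm $\theta_{n+1}=A_n\theta_n+B_n\theta_{n-1}+c_n$ (with $\theta_1=\theta_0\in\mathbb{R}^d$) for minimizing $f(\theta)=\frac12\langle\theta,H\theta\rangle-\langle q,\theta\rangle$, whose minimizer is $\theta_*=H^{-1}q$. *)

From HB Require Import structures.
From mathcomp Require Export all_boot all_order all_algebra.
Set Implicit Arguments. Unset Strict Implicit. Unset Printing Implicit Defensive.
Export Order.TTheory GRing.Theory Num.Theory.

(* Positive definiteness makes H invertible, and by Cayley-Hamilton H^-1 is a
   polynomial in H.  Scalability at n = 1 and n = 2 shows A = 2 P_1(H) and
   B = 3 Q_2(H), so A and B are polynomials in H too; the choices
   Bbar = (1 + B) H^-1 and Abar = (1 - A - B) H^-1 give the first two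
   identities, and stationarity forces c_n = (1 - A_n - B_n) H^-1 q. *)
From HB Require Import structures.
From mathcomp Require Import all_boot all_order all_algebra.
From mathcomp Require Import ring.
Import Order.TTheory GRing.Theory Num.Theory.
Set Implicit Arguments.
Unset Strict Implicit.
Unset Printing Implicit Defensive.

Local Open Scope ring_scope.

Lemma posdef_unitmx (R : numFieldType) (n : nat) (H : 'M[R]_n)
    (Hpd : forall v : 'cV[R]_n, v != 0 -> 0 < (v^T *m H *m v) 0 0) :
  H \in unitmx.
Proof.
rewrite unitmxE unitfE; apply/negP => /det0P [v nv vH].
suff: v^T != 0 by move/Hpd; rewrite trmxK vH mul0mx mxE ltxx.
by apply: contra nv => /eqP /(congr1 trmx); rewrite trmxK trmx0 => ->.
Qed.

Lemma invmx_horner_mx (R : fieldType) (n : nat) (H : 'M[R]_n.+1) :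
  H \in unitmx -> exists p : {poly R}, invmx H = horner_mx H p.
Proof.
move=> Hu; set c := char_poly H.
have c0 : c`_0 != 0.
  have detH : \det H != 0 by rewrite -unitfE -unitmxE.
  by rewrite char_poly_det mulf_eq0 negb_or detH andbT signr_eq0.
have low_c : take_poly 1 c = (c`_0)%:P.
  by apply/polyP => i; rewrite coef_take_poly coefC; case: i.
(* Cayley-Hamilton: 0 = c(H) = c_0 + D(H) H with D = drop_poly 1 c. *)
have CH := Cayley_Hamilton H.
rewrite -/c -(poly_take_drop 1 c) low_c rmorphD rmorphM /= horner_mx_C expr1
  horner_mx_X in CH.
exists (- (c`_0)^-1 *: drop_poly 1 c).
have inv_left : horner_mx H (- (c`_0)^-1 *: drop_poly 1 c) *m H = 1%:M.
  rewrite linearZ /= -scalemxAl.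
  have -> : horner_mx H (drop_poly 1 c) *m H = - (c`_0)%:M.
    by apply/eqP; rewrite -addr_eq0 addrC mulmxE CH.
  by rewrite scalerN scaleNr opprK scale_scalar_mx mulVf.
by rewrite -[invmx H]mul1mx -inv_left -mulmxA mulmxV // mulmx1.
Qed.

Lemma horner_mx_scale_cancel (R : comNzRingType) (n : nat) (H A : 'M[R]_n.+1)
    (p : {poly R}) (a b : R) :
  b * a = 1 -> horner_mx H p = a *: A -> A = horner_mx H (b *: p).
Proof. by move=> ba pA; rewrite linearZ /= pA scalerA ba scale1r. Qed.

Lemma stationary_offset (R : pzRingType) (n : nat) (M N C : 'M[R]_n)
    (x y : 'cV[R]_n) :
  x = M *m x + N *m x + C *m y -> C *m y = (1%:M - M - N) *m x.
Proof.
by move=> e; rewrite !mulmxBl mul1mx {1}e -addrA -opprD [X in X - _]addrC addrK.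
Qed.

Theorem theorem1 (R : realFieldType) (d : nat)
  (H : 'M[R]_d.+1) (q : 'cV[R]_d.+1)
  (P Q Rc : nat -> {poly R})
  (Hsym : H^T = H)
  (Hpd : forall v : 'cV[R]_d.+1, v != 0 -> 0 < (v^T *m H *m v) 0 0)
  (Hstat : forall n : nat, (0 < n)%N ->
     invmx H *m q =
       horner_mx H (P n) *m (invmx H *m q)
       + horner_mx H (Q n) *m (invmx H *m q)
       + horner_mx H (Rc n) *m q)
  (Hscal : exists A B : 'M[R]_d.+1, forall n : nat, (0 < n)%N ->
     horner_mx H (P n) = (n%:R / n.+1%:R) *: A /\
     horner_mx H (Q n) = ((n%:R - 1) / n.+1%:R) *: B) :
  exists Abar Bbar : {poly R}, forall n : nat, (0 < n)%N ->
    [/\ horner_mx H (P n) =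
          (2 * n%:R / n.+1%:R) *:
            (1%:M - (2^-1 *: (horner_mx H Abar + horner_mx H Bbar)) *m H),
        horner_mx H (Q n) =
          - ((n%:R - 1) / n.+1%:R) *: (1%:M - horner_mx H Bbar *m H)
      & horner_mx H (Rc n) *m q =
          (n.+1%:R^-1 *: (n%:R *: horner_mx H Abar + horner_mx H Bbar)) *m q].
Proof.
have Hu := posdef_unitmx Hpd.
have [h Hinv] := invmx_horner_mx Hu.
have [A [B AB]] := Hscal.
have eA : A = horner_mx H (2 *: P 1%N).
  by apply: horner_mx_scale_cancel (proj1 (AB 1%N isT)); field.
have eB : B = horner_mx H (3 *: Q 2%N).
  by apply: horner_mx_scale_cancel (proj2 (AB 2%N isT)); field.
set Abar := (1 - 2 *: P 1%N - 3 *: Q 2%N) * h.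
set Bbar := (1 + 3 *: Q 2%N) * h.
have eAbar : horner_mx H Abar = (1%:M - A - B) *m invmx H.
  by rewrite rmorphM !rmorphB /= rmorph1 -eA -eB Hinv mulmxE.
have eBbar : horner_mx H Bbar = (1%:M + B) *m invmx H.
  by rewrite rmorphM rmorphD /= rmorph1 -eB Hinv mulmxE.
exists Abar, Bbar => n n0.
rewrite (stationary_offset (Hstat n n0)) eAbar eBbar.
have [-> ->] := AB n n0.
have n1 : 1 + n%:R != 0 :> R by rewrite addrC natr1 pnatr_eq0.
split.
- rewrite -mulmxDl -scalemxAl -mulmxA mulVmx // mulmx1.
  by apply/matrixP => i j; rewrite !mxE; case: (i == j) => /=; field.
- by rewrite -mulmxA mulVmx // mulmx1 opprD addrA subrr add0r scaleNr scalerN opprK.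
- rewrite mulmxA scalemxAl -mulmxDl scalemxAl; congr (_ *m _ *m _).
  by apply/matrixP => i j; rewrite !mxE; case: (i == j) => /=; field.
Qed.
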